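(* Let $X,Y$ be complex Banach spaces, let $\emptyset\ne I\subseteq\mathbb R^n$ be closed with $I+I\subseteq I$, let $\mathcal B$ be a family of compact subsets of $X$ such that every $x\in X$ belongs to some $B\in\mathcal B$, and let $F:I\times X\to Y$ be Bohr $\mathcal B$-almost periodic. Suppose that: for every $l>0$ there exist $\mathbf t_0\in I$ and $k>0$ such that for every $\mathbf t\in I$ there exists $\mathbf t_0'\in I$ such that for every $\mathbf t_0''\in B(\mathbf t_0',l)\cap I$ we have $\mathbf t-\mathbf t_0''\in B(\mathbf t_0,kl)\cap I$. Then for each $B\in\mathcal B$ the set $\{F(\mathbf t;x):\mathbf t\in I,\ x\in B\}$ is relatively compact in $Y$; in particular $\sup_{\mathbf t\in I,x\in B}\|F(\mathbf t;x)\|_Y<\infty$.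
   Context: $B(\mathbf t_0,l)=\{\mathbf t\in\mathbb R^n:|\mathbf t-\mathbf t_0|\le l\}$ (Euclidean norm). For $I$ with $I+I\subseteq I$, a continuous $F:I\times X\to Y$ is Bohr $\mathcal B$-almost periodic if for every $B\in\mathcal B$ and $\epsilon>0$ there exists $l>0$ such that for each $\mathbf t_0\in I$ there exists $\tau\in B(\mathbf t_0,l)\cap I$ with $\|F(\mathbf t+\tau;x)-F(\mathbf t;x)\|_Y\le\epsilon$ for all $\mathbf t\in I$, $x\in B$. *)

From HB Require Import structures.
From mathcomp Require Import all_boot all_order all_algebra.
From mathcomp Require Import all_classical all_reals all_analysis.
Set Implicit Arguments. Unset Strict Implicit. Unset Printing Implicit Defensive.
Import Order.TTheory GRing.Theory Num.Theory.
Import numFieldNormedType.Exports.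
Local Open Scope classical_set_scope.
Local Open Scope ring_scope.

Definition eucl_norm (R : realType) (n : nat) (v : 'rV[R]_n) : R :=
  Num.sqrt (\sum_(i < n) (v ord0 i) ^+ 2).

Definition eball (R : realType) (n : nat) (t0 : 'rV[R]_n) (l : R) : set 'rV[R]_n :=
  [set t | eucl_norm (t - t0) <= l].

(* Bohr B-almost periodicity of F : I x X -> Y (the function is given on all
   of R^n x X, only its values on I x X matter). *)
Definition bohr_B_ap (R : realType) (n : nat) (K : numFieldType)
  (X Y : normedModType K) (I : set 'rV[R]_n) (BB : set (set X))
  (F : 'rV[R]_n -> X -> Y) : Prop :=
  {within I `*` [set: X], continuous (fun p : 'rV[R]_n * X => F p.1 p.2)} /\
  forall B, BB B -> forall eps : K, 0 < eps ->
    exists l : R, 0 < l /\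
      forall t0, I t0 -> exists tau, (eball t0 l `&` I) tau /\
        forall t x, I t -> B x -> `|F (t + tau) x - F t x| <= eps.

From HB Require Import structures.
From mathcomp Require Import all_boot all_order all_algebra.
From mathcomp Require Import all_classical all_reals all_analysis.
From mathcomp Require Import finmap.
Import Order.TTheory GRing.Theory Num.Theory.
Import numFieldNormedType.Exports.
Local Open Scope classical_set_scope.
Local Open Scope ring_scope.

(* Fix B and e > 0. The Bohr property with tolerance e/2 gives a length l; the
   hypothesis on I gives t0 and k for this l. For t in I, an e/2-almost period
   tau taken near the point t0' attached to t puts t - tau in the compact set
   I ∩ B(t0, kl), and F(t; x) = F((t - tau) + tau; x) is e/2-close to
   F(t - tau; x). So the range of F on I × B lies within e of the compact image
   of (I ∩ B(t0, kl)) × B for every e: it is totally bounded, hence relatively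
   compact in the complete space Y, and compact sets are bounded. *)

Lemma mx_norm_le_eucl_norm (R : realType) (n : nat) (v : 'rV[R]_n) :
  `|v| <= eucl_norm v.
Proof.
rewrite [leLHS]/Num.norm /= mx_normrE.
apply: bigmax_le => [|[i j] _ /=]; first by rewrite /eucl_norm sqrtr_ge0.
rewrite (ord1 i) /eucl_norm -sqrtr_sqr ler_sqrt; last first.
  by apply: sumr_ge0 => k _; rewrite sqr_ge0.
rewrite (bigD1 j) //= lerDl; apply: sumr_ge0 => k _; exact: sqr_ge0.
Qed.

Lemma eball_sub_closed_ball (R : realType) (n : nat) (t0 : 'rV[R]_n) (r : R) :
  0 < r -> eball t0 r `<=` closed_ball t0 r.
Proof.
move=> r0 t; rewrite closed_ballE // /closed_ball_ /= distrC => ht.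
apply: le_trans ht; exact: mx_norm_le_eucl_norm.
Qed.

Lemma closed_ball_rV_compact (R : realType) (n : nat) (t0 : 'rV[R]_n) (r : R) :
  0 < r -> compact (closed_ball t0 r).
Proof.
move=> r0; apply: bounded_closed_compact; last exact: closed_ball_closed.
rewrite closed_ballE //.
apply: filterS (nbhs_pinfty_ge (num_real (`|t0| + r))) => M hM t /= ht.
apply: le_trans hM; have := ler_normB t0 (t0 - t); rewrite subKr => h.
by apply: le_trans h _; rewrite lerD2l.
Qed.

Lemma compact_norm_bounded (K : numFieldType) (V : normedModType K) (A : set V) :
  compact A -> exists M : K, forall x, A x -> `|x| <= M.
Proof.
rewrite compact_cover => /(_ V A (fun a => ball a 1)) [].
- by move=> a _; exact: ball_open.
- by move=> a Aa; exists a => //; exact: ballxx.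
(* K is only partially ordered: bound by a sum of norms rather than a maximum. *)
move=> D _ AD; exists (\sum_(a <- D) (`|a| + 1)) => x /AD [a Da /=].
rewrite -ball_normE /= => ax.
have -> : x = a - (a - x) by rewrite opprB addrC subrK.
apply: le_trans (ler_normB _ _) _; rewrite (big_rem a) //= -addrA lerD2l.
apply: le_trans (ltW ax) _; rewrite lerDl.
by apply: sumr_ge0 => b _; rewrite addr_ge0.
Qed.

(* A cluster point p in C of the traces on C of the e-neighbourhoods of the
   members of U works: if U contained the complement of ball p (e + e), points
   of C arbitrarily close to p would be e-close to that complement. *)
Lemma ultra_ball_of_compact_near (R : numFieldType) (T : pseudoMetricType R)
    (U : set_system T) (C : set T) (e : R) :
  UltraFilter U -> compact C -> 0 < e ->
  (forall V, U V -> exists2 c, C c & exists2 y, V y & ball c e y) ->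
  exists p, U (ball p (e + e)).
Proof.
move=> UU cC e0 near_C.
pose H := filter_from U (fun V => C `&` [set c | exists2 y, V y & ball c e y]).
have HF : ProperFilter H.
  apply: filter_from_proper; last by move=> V /near_C [c Cc cV]; exists c.
  apply: filter_from_filter; first by exists setT; exact: filterT.
  move=> V1 V2 UV1 UV2; exists (V1 `&` V2); first exact: filterI.
  by move=> c [Cc [y [V1y V2y] cy]]; split; split=> //; exists y.
have HC : H C by exists setT; [exact: filterT | move=> c []].
have [p [_ clp]] := cC H HF HC; exists p.
have [//|Unp] := in_ultra_setVsetC (ball p (e + e)) UU.
have Hfar : H [set c | exists2 y, ~ ball p (e + e) y & ball c e y].
  by exists (~` ball p (e + e)) => // c [].
have [c [[y npy cy] pc]] := clp _ _ Hfar (nbhsx_ballx p e e0).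
by case: npy; exact: ball_triangle pc cy.
Qed.

Lemma precompact_compact_approx (R : numFieldType)
    (T : completePseudoMetricType R) (A : set T) :
  (forall e : R, 0 < e -> exists2 C, compact C & A `<=` \bigcup_(c in C) ball c e) ->
  precompact A.
Proof.
move=> approx; rewrite precompactE compact_ultra => U UU Ucl.
have cU : cauchy U.
  apply: cauchy_exP => e e0.
  have e40 : 0 < e / 2 / 2 by rewrite !divr_gt0.
  have [C cC AC] := approx _ e40.
  have e20 : 0 < e / 2 by rewrite divr_gt0.
  rewrite [e](splitr e).
  apply: (@ultra_ball_of_compact_near _ _ _ _ _ UU cC e20) => V UV.
  have [y [Vy cly]] := filter_ex (filterI UV Ucl).
  have [a [Aa ya]] := cly _ (nbhsx_ballx y _ e40).
  have [c Cc ca] := AC a Aa; exists c => //; exists y => //.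
  rewrite [e / 2]splitr.
  exact: ball_triangle ca (ball_sym ya).
have Ucvg : U --> lim U by exact: cauchy_cvg.
exists (lim U); split => //.
apply: closed_closure => B /Ucvg; rewrite nbhs_filterE => UB.
exact: filter_ex (filterI Ucl UB).
Qed.

Lemma bohr_ap_range_near_compact (R : realType) (n : nat) (K : numFieldType)
    (X Y : normedModType K) (I : set 'rV[R]_n) (BB : set (set X))
    (F : 'rV[R]_n -> X -> Y) (B : set X) (e : K) :
  closed I -> bohr_B_ap I BB F ->
  (forall l : R, 0 < l -> exists t0, I t0 /\ exists k : R, 0 < k /\
     forall t, I t -> exists t0', I t0' /\
       forall t0'', (eball t0' l `&` I) t0'' ->
         (eball t0 (k * l) `&` I) (t - t0'')) ->
  BB B -> compact B -> 0 < e ->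
  exists2 C, compact C &
    [set y | exists t x, I t /\ B x /\ y = F t x] `<=` \bigcup_(c in C) ball c e.
Proof.
move=> Icl [Fcont Fap] translates BB_B cB e0.
have [l [l0 almost_period]] := Fap B BB_B (e / 2) (divr_gt0 e0 (ltr0n _ 2)).
have [t0 [_ [k [k0 translate]]]] := translates l l0.
have kl0 : 0 < k * l by rewrite mulr_gt0.
pose T0 := closed_ball t0 (k * l) `&` I.
have cT0 : compact T0 by apply: compact_closedI => //; exact: closed_ball_rV_compact.
exists ((fun p => F p.1 p.2) @` (T0 `*` B)).
  apply: continuous_compact; last exact: compact_setX.
  by apply: continuous_subspaceW Fcont => -[t x] [[_ It] _].
move=> _ [t [x [It [Bx ->]]]].
have [t0' [It0' translate_t]] := translate t It.
have [tau [near_t0' Ftau]] := almost_period t0' It0'.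
have [near_t0 Is] := translate_t tau near_t0'.
exists (F (t - tau) x).
  by exists (t - tau, x) => //; split=> //; split=> //; exact: eball_sub_closed_ball.
have := Ftau _ _ Is Bx; rewrite subrK -ball_normE /= distrC => Fshift.
by apply: le_lt_trans Fshift _; rewrite ltr_pdivrMr // ltr_pMr // ltr1n.
Qed.

Theorem proposition2p16 (R : realType) (n : nat) (K : numFieldType)
  (X Y : completeNormedModType K) (I : set 'rV[R]_n) (BB : set (set X))
  (F : 'rV[R]_n -> X -> Y) :
  I !=set0 -> closed I ->
  (forall s t, I s -> I t -> I (s + t)) ->
  (forall B, BB B -> compact B) ->
  (forall x : X, exists B, BB B /\ B x) ->
  bohr_B_ap I BB F ->
  (forall l : R, 0 < l -> exists t0, I t0 /\ exists k : R, 0 < k /\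
     forall t, I t -> exists t0', I t0' /\
       forall t0'', (eball t0' l `&` I) t0'' ->
         (eball t0 (k * l) `&` I) (t - t0'')) ->
  forall B, BB B ->
    compact (closure [set y : Y | exists t x, I t /\ B x /\ y = F t x]) /\
    exists M : K, forall t x, I t -> B x -> `|F t x| <= M.
Proof.
move=> _ Icl _ cBB _ Fap translates B BB_B.
have cS : compact (closure [set y : Y | exists t x, I t /\ B x /\ y = F t x]).
  rewrite -precompactE; apply: precompact_compact_approx => e e0.
  exact: bohr_ap_range_near_compact Icl Fap translates BB_B (cBB B BB_B) e0.
split=> //; move: cS => /compact_norm_bounded [M bound].
by exists M => t x It Bx; apply/bound/subset_closure; exists t, x.
Qed.
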